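(* Let $(x_t^{**},y_t^{**})$, with $y_t^{**}=(\gamma^{**}_{1t},\dots,\gamma^{**}_{It})$, be a global minimax point on $\mathcal{X}\times\mathcal{Y}$ of \[ (x,y)\mapsto\sum_{n<t}\Big[L_n(x,y)+\frac{\lambda}{n^{1/9}}\sum_{i=1}^I\log(\gamma_i+1)\Big], \] let $(x_t^*,y_t^* )$ be a global minimax point on $\mathcal{X}\times\mathcal{Y}$ of $\sum_{n<t}L_n(x,y)$, and let $y_t^{\ddagger}=(\gamma^{\ddagger}_{1t},\dots,\gamma^{\ddagger}_{It})\in\arg\max_{y\in\mathcal{Y}}\sum_{n<t}\big[L_n(x_t^*,y)+\frac{\lambda}{n^{1/9}}\sum_{i=1}^I\log(\gamma_i+1)\big]$. Then \[ \sum_{n<t}\Big[L_n(x_t^{**},y_t^{**})+\frac{\lambda}{n^{1/9}}\sum_{i=1}^I\log(\gamma^{**}_{it}+1)\Big]\ge\min_{x\in\mathcal{X}}\max_{y\in\mathcal{Y}}\sum_{n<t}L_n(x,y) \] and \[ \sum_{n<t}\Big[L_n(x_t^{**},y_t^{**})-\frac{\lambda}{n^{1/9}}\sum_{i=1}^I\log(\gamma^{\ddagger}_{it}+1)\Big]\le\min_{x\in\mathcal{X}}\max_{y\in\mathcal{Y}}\sum_{n<t}L_n(x,y). \]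
   Context: Let $\mathcal{X}\subseteq\mathbb{R}^d$ be compact. For $t=1,\dots,T$, $f_t,c_{it}:\mathcal{X}\to\mathbb{R}$ ($i=1,\dots,I$) are $G_0$-Lipschitz w.r.t. $\ell_1$, $b_i\ge0$, and for $y=(\gamma_1,\dots,\gamma_I)$, $L_t(x,y)=f_t(x)+\sum_i\gamma_i[c_{it}(x)-b_i]$. Fix constants $\lambda>0$, $y_{\max}>0$ and $\mathcal{Y}=[0,y_{\max}]^I$. A global minimax point of $h$ on $\mathcal{X}\times\mathcal{Y}$ is $(x^*,y^* )$ with $h(x^*,y)\le h(x^*,y^* )\le\max_{y'\in\mathcal{Y}}h(x,y')$ for all $x\in\mathcal{X},y\in\mathcal{Y}$. *)

From HB Require Import structures.
From mathcomp Require Import all_boot all_order all_algebra.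
From mathcomp Require Import all_classical all_reals all_analysis.
Set Implicit Arguments. Unset Strict Implicit. Unset Printing Implicit Defensive.
Import Order.TTheory GRing.Theory Num.Theory.
Import numFieldNormedType.Exports.
Local Open Scope classical_set_scope.
Local Open Scope ring_scope.

Definition Lag (R : realType) (d I : nat) (f : nat -> 'rV[R]_d -> R)
  (c : nat -> 'I_I -> 'rV[R]_d -> R) (b : 'I_I -> R) (n : nat)
  (x : 'rV[R]_d) (y : 'rV[R]_I) : R :=
  f n x + \sum_(i < I) y 0 i * (c n i x - b i).

Definition reg (R : realType) (I : nat) (lam : R) (n : nat) (y : 'rV[R]_I) : R :=
  lam / (n%:R `^ (9%:R)^-1) * \sum_(i < I) ln (y 0 i + 1).

Definition Ybox (R : realType) (I : nat) (ymax : R) : set 'rV[R]_I :=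
  [set y | forall i, 0 <= y 0 i <= ymax].

(* max_{y' in Y} h(x, y'), written as a supremum (attained under the
   standing assumptions) *)
Definition maxY (R : realType) (d I : nat) (Y : set 'rV[R]_I)
  (h : 'rV[R]_d -> 'rV[R]_I -> R) (x : 'rV[R]_d) : R :=
  sup [set h x y | y in Y].

Definition minmax (R : realType) (d I : nat) (X : set 'rV[R]_d) (Y : set 'rV[R]_I)
  (h : 'rV[R]_d -> 'rV[R]_I -> R) : R :=
  inf [set maxY Y h x | x in X].

Definition global_minimax (R : realType) (d I : nat) (X : set 'rV[R]_d)
  (Y : set 'rV[R]_I) (h : 'rV[R]_d -> 'rV[R]_I -> R) (xs : 'rV[R]_d) (ys : 'rV[R]_I) : Prop :=
  X xs /\ Y ys /\
  forall x y, X x -> Y y -> h xs y <= h xs ys /\ h xs ys <= maxY Y h x.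

Definition lipschitz_l1 (R : realType) (d : nat) (X : set 'rV[R]_d) (G0 : R)
  (g : 'rV[R]_d -> R) : Prop :=
  forall x x', X x -> X x' -> `|g x - g x'| <= G0 * \sum_(j < d) `|x 0 j - x' 0 j|.

From HB Require Import structures.
From mathcomp Require Import all_boot all_order all_algebra.
From mathcomp Require Import all_classical all_reals all_analysis.
Import Order.TTheory GRing.Theory Num.Theory.
Import numFieldNormedType.Exports.
Local Open Scope classical_set_scope.
Local Open Scope ring_scope.

(* At a global minimax point the objective equals min_x max_y.  Adding a
   regularizer r(y) >= 0 can only raise the saddle value; conversely, at the
   regularized saddle point the unregularized objective exceeds min_x max_y
   by at most r(y'), where y' maximizes the regularized objective at the
   unregularized minimizer x*.  Both follow by testing the min-max property
   of each saddle point against the x-coordinate of the other one. *)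

Section MinimaxValue.
Context {R : realType} {d I : nat} {X : set 'rV[R]_d} {Y : set 'rV[R]_I}.

Lemma maxY_le (h : 'rV[R]_d -> 'rV[R]_I -> R) x m :
  Y !=set0 -> (forall y, Y y -> h x y <= m) -> maxY Y h x <= m.
Proof.
move=> [y0 Yy0] hm; apply: ge_sup; first by exists (h x y0), y0.
by move=> _ [y Yy <-]; exact: hm.
Qed.

Lemma maxY_attained (h : 'rV[R]_d -> 'rV[R]_I -> R) x y0 :
  Y y0 -> (forall y, Y y -> h x y <= h x y0) -> maxY Y h x = h x y0.
Proof.
move=> Yy0 hmax; apply/le_anti/andP; split.
  by apply: maxY_le hmax; exists y0.
have ub : has_ubound [set h x y | y in Y].
  by exists (h x y0) => _ [y Yy <-]; exact: hmax.
by apply: ub_le_sup ub _ _; exists y0.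
Qed.

Lemma minmax_global_minimax {h : 'rV[R]_d -> 'rV[R]_I -> R} {xs ys} :
  global_minimax X Y h xs ys -> minmax X Y h = h xs ys.
Proof.
move=> [Xxs [Yys saddle]].
have lb : lbound [set maxY Y h x | x in X] (h xs ys).
  by move=> _ [x Xx <-]; have [_] := saddle x ys Xx Yys.
apply/le_anti/andP; split; last first.
  by apply: lb_le_inf => //; exists (maxY Y h xs), xs.
rewrite -(@maxY_attained h xs ys) //.
  by apply: ge_inf; [exists (h xs ys) | exists xs].
by move=> y Yy; have [] := saddle xs y Xxs Yy.
Qed.

Context {h : 'rV[R]_d -> 'rV[R]_I -> R} {r : 'rV[R]_I -> R}.
Hypothesis r_ge0 : forall y, Y y -> 0 <= r y.
Context {xs xss : 'rV[R]_d} {ys yss : 'rV[R]_I}.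
Hypothesis minimax_h : global_minimax X Y h xs ys.
Hypothesis minimax_hr : global_minimax X Y (fun x y => h x y + r y) xss yss.

Lemma minmax_le_regularized_value : minmax X Y h <= h xss yss + r yss.
Proof.
have [Xxs [Yys saddle]] := minimax_h; have [Xxss [Yyss saddle_r]] := minimax_hr.
rewrite (minmax_global_minimax minimax_h).
have [_ /le_trans] := saddle xss ys Xxss Yys; apply.
apply: maxY_le; first by exists ys.
move=> y Yy; have [/(le_trans _) + _] := saddle_r xss y Xxss Yy; apply.
by rewrite lerDl r_ge0.
Qed.

Lemma regularized_value_le_minmax ydd : Y ydd ->
  (forall y, Y y -> h xs y + r y <= h xs ydd + r ydd) ->
  h xss yss - r ydd <= minmax X Y h.
Proof.
move=> Yydd ydd_max.
have [Xxs [Yys saddle]] := minimax_h; have [Xxss [Yyss saddle_r]] := minimax_hr.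
rewrite (minmax_global_minimax minimax_h) lerBlDr.
have h_le_hr : h xss yss <= h xss yss + r yss by rewrite lerDl r_ge0.
apply: (le_trans h_le_hr).
have [_ /le_trans] := saddle_r xs yss Xxs Yyss; apply.
rewrite (@maxY_attained (fun x y => h x y + r y) xs ydd) // lerD2r.
by have [] := saddle xs ydd Xxs Yydd.
Qed.

End MinimaxValue.

Lemma reg_ge0 (R : realType) (I : nat) (lam : R) (n : nat) (y : 'rV[R]_I) :
  0 <= lam -> (forall i, 0 <= y 0 i) -> 0 <= reg lam n y.
Proof.
move=> lam_ge0 y_ge0; apply: mulr_ge0; first by rewrite divr_ge0 ?powR_ge0.
by apply: sumr_ge0 => i _; rewrite ln_ge0 // lerDr.
Qed.

Theorem lemma9 (R : realType) (d I : nat) (X : set 'rV[R]_d) (G0 : R)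
  (f : nat -> 'rV[R]_d -> R) (c : nat -> 'I_I -> 'rV[R]_d -> R) (b : 'I_I -> R)
  (lam ymax : R) (t : nat)
  (xss xs : 'rV[R]_d) (yss ys ydd : 'rV[R]_I) :
  compact X ->
  (forall n, lipschitz_l1 X G0 (f n)) ->
  (forall n i, lipschitz_l1 X G0 (c n i)) ->
  (forall i, 0 <= b i) ->
  0 < lam -> 0 < ymax ->
  global_minimax X (@Ybox R I ymax)
    (fun x y => \sum_(1 <= n < t) (Lag f c b n x y + reg lam n y)) xss yss ->
  global_minimax X (@Ybox R I ymax)
    (fun x y => \sum_(1 <= n < t) Lag f c b n x y) xs ys ->
  @Ybox R I ymax ydd ->
  (forall y, @Ybox R I ymax y ->
     \sum_(1 <= n < t) (Lag f c b n xs y + reg lam n y)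
       <= \sum_(1 <= n < t) (Lag f c b n xs ydd + reg lam n ydd)) ->
  minmax X (@Ybox R I ymax) (fun x y => \sum_(1 <= n < t) Lag f c b n x y)
    <= \sum_(1 <= n < t) (Lag f c b n xss yss + reg lam n yss) /\
  \sum_(1 <= n < t) (Lag f c b n xss yss - reg lam n ydd)
    <= minmax X (@Ybox R I ymax) (fun x y => \sum_(1 <= n < t) Lag f c b n x y).
Proof.
move=> _ _ _ _ lam_gt0 _ minimax_hr minimax_h Yydd ydd_max.
pose r (y : 'rV[R]_I) := \sum_(1 <= n < t) reg lam n y.
have r_ge0 y : Ybox ymax y -> 0 <= r y.
  move=> Yy; apply: sumr_ge0 => n _; apply: reg_ge0 (ltW lam_gt0) _ => i.
  by have /andP[] := Yy i.
have split_r x y : \sum_(1 <= n < t) (Lag f c b n x y + reg lam n y)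
    = \sum_(1 <= n < t) Lag f c b n x y + r y by rewrite big_split.
have ydd_max_split y : Ybox ymax y ->
    \sum_(1 <= n < t) Lag f c b n xs y + r y
      <= \sum_(1 <= n < t) Lag f c b n xs ydd + r ydd.
  by move=> Yy; rewrite -!split_r; exact: ydd_max.
rewrite (funext (fun x => funext (split_r x))) in minimax_hr.
rewrite split_r sumrB -/(r ydd); split.
  exact: (minmax_le_regularized_value r_ge0 minimax_h minimax_hr).
have lb := regularized_value_le_minmax r_ge0 minimax_h minimax_hr _ Yydd
  ydd_max_split.
exact: lb.
Qed.
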